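(* Let $\kappa$ be a regular uncountable cardinal. Every proper pleasant ideal on $\kappa$ is subnormal, i.e. is contained in some proper normal ideal on $\kappa$.
   Context: An ideal on $\kappa$ is a family of subsets of $\kappa$ closed under subsets and finite unions, which is $<\kappa$-complete and contains all singletons (so it contains all subsets of size $<\kappa$). It is proper if $\kappa\notin I$. For $A\subseteq\kappa$ and $X_\alpha\subseteq\kappa$, $\bigtriangledown_{\alpha\in A}X_\alpha=\{\xi<\kappa:\exists\alpha<\xi\,(\alpha\in A\wedge \xi\in X_\alpha)\}$. $I$ is normal if $X_\alpha\in I$ for all $\alpha<\kappa$ implies $\bigtriangledown_{\alpha<\kappa}X_\alpha\in I$ (diagonal union with $A=\kappa$). $I$ is pleasant if whenever $A\in I$ and $X_\alpha\in I$ for all $\alpha$, then $\bigtriangledown_{\alpha\in A}X_\alpha\in I$. *)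

(* The cardinal kappa is represented by a type K carrying a strict well-order
   lt whose order type is kappa (an initial ordinal).  Subsets of kappa are
   predicates K -> Prop; an ideal is a predicate on such subsets. *)


Definition strict_wellorder {K : Type} (lt : K -> K -> Prop) : Prop :=
  (forall x, ~ lt x x) /\
  (forall x y z, lt x y -> lt y z -> lt x z) /\
  (forall x y, lt x y \/ x = y \/ lt y x) /\
  well_founded lt.

(* the proper initial segment below x, i.e. the ordinal x < kappa *)
Definition below {K : Type} (lt : K -> K -> Prop) (x : K) : Type :=
  { y : K | lt y x }.

(* the order type of (K, lt) is a cardinal: K does not inject into any
   proper initial segment *)
Definition is_cardinal_order {K : Type} (lt : K -> K -> Prop) : Prop :=
  forall x : K, ~ exists f : K -> below lt x,
      forall a b, f a = f b -> a = b.

Definition is_regular {K : Type} (lt : K -> K -> Prop) : Prop :=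
  forall (x : K) (f : below lt x -> K), exists b : K, forall i, lt (f i) b.

Definition is_uncountable (K : Type) : Prop :=
  ~ exists f : K -> nat, forall a b, f a = f b -> a = b.

Definition is_ideal {K : Type} (lt : K -> K -> Prop)
  (I : (K -> Prop) -> Prop) : Prop :=
  (forall A B : K -> Prop, I B -> (forall z, A z -> B z) -> I A) /\
  (forall A B : K -> Prop, I A -> I B -> I (fun z => A z \/ B z)) /\
  (forall (x : K) (F : below lt x -> K -> Prop),
      (forall i, I (F i)) -> I (fun z => exists i, F i z)) /\
  (forall a : K, I (fun z => z = a)).

Definition is_proper {K : Type} (I : (K -> Prop) -> Prop) : Prop :=
  ~ I (fun _ => True).

Definition diag_union {K : Type} (lt : K -> K -> Prop) (A : K -> Prop)
  (X : K -> K -> Prop) : K -> Prop :=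
  fun xi => exists alpha, lt alpha xi /\ A alpha /\ X alpha xi.

Definition is_normal {K : Type} (lt : K -> K -> Prop)
  (I : (K -> Prop) -> Prop) : Prop :=
  forall X : K -> K -> Prop, (forall a, I (X a)) ->
    I (diag_union lt (fun _ => True) X).

Definition is_pleasant {K : Type} (lt : K -> K -> Prop)
  (I : (K -> Prop) -> Prop) : Prop :=
  forall (A : K -> Prop) (X : K -> K -> Prop), I A -> (forall a, I (X a)) ->
    I (diag_union lt A X).

Definition is_subnormal {K : Type} (lt : K -> K -> Prop)
  (I : (K -> Prop) -> Prop) : Prop :=
  exists J : (K -> Prop) -> Prop,
    is_ideal lt J /\ is_proper J /\ is_normal lt J /\
    (forall A, I A -> J A).

(* The normal ideal generated by I consists of the sets covered by some B ∪ ∇X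
   with B and all X_a in I; it is an ideal, normal and contains I.  It is proper:
   if κ = B ∪ ∇X, pleasantness keeps A_0 = B, A_{n+1} = A_n ∪ ∇_{A_n} X in I,
   every ξ lies in some A_n by induction on ξ, and I is closed under countable
   unions because the first ω elements of κ are bounded below κ. *)

From Stdlib Require Import Classical IndefiniteDescription PeanoNat Lia.

Lemma wf_least {K : Type} (lt : K -> K -> Prop) (wf : well_founded lt)
  (P : K -> Prop) : (exists z, P z) -> exists z, P z /\ forall w, P w -> ~ lt w z.
Proof.
  intros [z Pz]. induction z as [z IH] using (well_founded_ind wf).
  destruct (classic (exists w, P w /\ lt w z)) as [[w [Pw ltwz]] | Nmin].
  - exact (IH w ltwz Pw).
  - exists z. split; [exact Pz |]. intros w Pw ltwz. apply Nmin. eauto.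
Qed.

Lemma uncountable_inhabited (K : Type) : is_uncountable K -> inhabited K.
Proof.
  intro Hunc. apply NNPP. intro Nin. apply Hunc. exists (fun _ => 0).
  intros a. exfalso. exact (Nin (inhabits a)).
Qed.

Section Ideal.

Variables (K : Type) (lt : K -> K -> Prop) (I : (K -> Prop) -> Prop).
Hypothesis HI : is_ideal lt I.

Lemma ideal_subset (A B : K -> Prop) : I B -> (forall z, A z -> B z) -> I A.
Proof. apply HI. Qed.

Lemma ideal_union (A B : K -> Prop) : I A -> I B -> I (fun z => A z \/ B z).
Proof. apply HI. Qed.

Lemma ideal_bigcup (x : K) (F : below lt x -> K -> Prop) :
  (forall i, I (F i)) -> I (fun z => exists i, F i z).
Proof. apply HI. Qed.

Lemma ideal_singleton (a : K) : I (fun z => z = a).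
Proof. apply HI. Qed.

Lemma ideal_empty (a : K) : I (fun _ => False).
Proof. apply (ideal_subset _ _ (ideal_singleton a)). intros z []. Qed.

End Ideal.

Arguments ideal_subset {K lt I}.
Arguments ideal_union {K lt I}.
Arguments ideal_bigcup {K lt I}.
Arguments ideal_singleton {K lt I}.
Arguments ideal_empty {K lt I}.

Section OmegaChain.

Variables (K : Type) (lt : K -> K -> Prop).
Hypothesis Hwo : strict_wellorder lt.
Hypothesis Hnomax : forall m, exists y, lt m y.

Let Htrans := proj1 (proj2 Hwo).
Let Htri := proj1 (proj2 (proj2 Hwo)).
Let Hwf := proj2 (proj2 (proj2 Hwo)).

Lemma immediate_successor :
  exists succ : K -> K, forall y, lt y (succ y) /\ forall w, lt y w -> ~ lt w (succ y).
Proof.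
  apply (functional_choice (fun y s => lt y s /\ forall w, lt y w -> ~ lt w s)).
  intro y. exact (wf_least lt Hwf (lt y) (Hnomax y)).
Qed.

Variables (succ : K -> K) (m0 : K).
Hypothesis Hsucc : forall y, lt y (succ y) /\ forall w, lt y w -> ~ lt w (succ y).
Hypothesis Hm0 : forall w, ~ lt w m0.

Let e (n : nat) : K := Nat.iter n succ m0.

Lemma iter_succ_increasing (m n : nat) : m < n -> lt (e m) (e n).
Proof.
  induction n as [|n IH]; intro ltmn; [lia |].
  destruct (Nat.eq_dec m n) as [-> | nemn]; [apply Hsucc |].
  apply Htrans with (e n); [apply IH; lia | apply Hsucc].
Qed.

Lemma iter_succ_injective (m n : nat) : e m = e n -> m = n.
Proof.
  intro Emn. destruct (Nat.lt_trichotomy m n) as [l | [l | l]]; [| exact l |];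
    pose proof (iter_succ_increasing _ _ l) as L; rewrite Emn in L;
    destruct (proj1 Hwo _ L).
Qed.

Lemma iter_succ_initial_segment (n : nat) (y : K) :
  (y = e n \/ lt y (e n)) -> exists k, y = e k.
Proof.
  revert y. induction n as [|n IH]; intros y [Ey | ltye]; eauto.
  - destruct (Hm0 y ltye).
  - destruct (Htri y (e n)) as [l | [l | l]]; eauto.
    destruct (proj2 (Hsucc (e n)) y l ltye).
Qed.

Lemma iter_succ_bounded : is_uncountable K -> exists x, forall n, lt (e n) x.
Proof.
  intro Hunc. apply NNPP. intro Nbd. apply Hunc.
  assert (Hrange : forall y, exists k, y = e k).
  { intro y. destruct (not_all_ex_not _ _ (fun H => Nbd (ex_intro _ y H))) as [n Hn].
    apply (iter_succ_initial_segment n).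
    destruct (Htri y (e n)) as [l | [l | l]]; [right | left |]; tauto. }
  destruct (functional_choice _ Hrange) as [h Hh].
  exists h. intros a b Eab. rewrite (Hh a), (Hh b), Eab. reflexivity.
Qed.

End OmegaChain.

Lemma bounded_omega_chain (K : Type) (lt : K -> K -> Prop) :
  strict_wellorder lt -> is_uncountable K -> (forall m, exists y, lt m y) ->
  exists (e : nat -> K) (x : K),
    (forall m n, e m = e n -> m = n) /\ forall n, lt (e n) x.
Proof.
  intros Hwo Hunc Hnomax.
  destruct (uncountable_inhabited K Hunc) as [k].
  destruct (wf_least lt (proj2 (proj2 (proj2 Hwo))) (fun _ => True) (ex_intro _ k I))
    as [m0 [_ Hm0]].
  destruct (immediate_successor K lt Hwo Hnomax) as [succ Hsucc].
  destruct (iter_succ_bounded K lt Hwo succ m0 Hsucc (fun w => Hm0 w I) Hunc)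
    as [x Hx].
  exists (fun n => Nat.iter n succ m0), x. split; [| exact Hx].
  exact (iter_succ_injective K lt Hwo succ m0 Hsucc).
Qed.

Section CountableUnion.

Variables (K : Type) (lt : K -> K -> Prop) (I : (K -> Prop) -> Prop).
Hypotheses (Hwo : strict_wellorder lt) (HI : is_ideal lt I) (Hprop : is_proper I).

Lemma proper_ideal_no_max (m : K) : exists y, lt m y.
Proof.
  apply NNPP. intro Nmax. apply Hprop.
  apply (ideal_subset HI _ (fun z => (exists i : below lt m, proj1_sig i = z) \/ z = m)).
  - apply (ideal_union HI); [| apply (ideal_singleton HI)].
    apply (ideal_bigcup HI m (fun i z => proj1_sig i = z)).
    intro i. apply (ideal_subset HI _ _ (ideal_singleton HI (proj1_sig i))).
    intros z Hz. now subst.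
  - intros z _. destruct (proj1 (proj2 (proj2 Hwo)) z m) as [l | [l | l]].
    + left. exists (exist _ z l). reflexivity.
    + right. exact l.
    + exfalso. eauto.
Qed.

(* A nat-indexed union becomes a union over the bound x of an injective
   ω-chain: index i collects the (at most one) A n with e n = i. *)
Lemma ideal_countable_union :
  is_uncountable K ->
  forall A : nat -> K -> Prop, (forall n, I (A n)) -> I (fun z => exists n, A n z).
Proof.
  intros Hunc A HA.
  destruct (bounded_omega_chain K lt Hwo Hunc proper_ideal_no_max)
    as [e [x [Einj Hx]]].
  apply (ideal_subset HI _
           (fun z => exists i : below lt x, exists n, e n = proj1_sig i /\ A n z)).
  - apply (ideal_bigcup HI). intro i.
    destruct (classic (exists n, e n = proj1_sig i)) as [[n En] | Nn].
    + apply (ideal_subset HI _ _ (HA n)).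
      intros z [n' [En' Hz]]. rewrite (Einj n' n) in Hz; [exact Hz | congruence].
    + apply (ideal_subset HI _ _ (ideal_empty HI x)).
      intros z [n [En _]]. eauto.
  - intros z [n Hz]. exists (exist _ (e n) (Hx n)), n. auto.
Qed.

End CountableUnion.

Definition normal_closure {K : Type} (lt : K -> K -> Prop)
  (I : (K -> Prop) -> Prop) (Y : K -> Prop) : Prop :=
  exists (B : K -> Prop) (X : K -> K -> Prop),
    I B /\ (forall a, I (X a)) /\
    forall z, Y z -> B z \/ diag_union lt (fun _ => True) X z.

Fixpoint diag_iter {K : Type} (lt : K -> K -> Prop) (B : K -> Prop)
  (X : K -> K -> Prop) (n : nat) : K -> Prop :=
  match n with
  | 0 => B
  | S n => fun z => diag_iter lt B X n z \/ diag_union lt (diag_iter lt B X n) X z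
  end.

Section NormalClosure.

Variables (K : Type) (lt : K -> K -> Prop) (I : (K -> Prop) -> Prop).
Hypothesis HI : is_ideal lt I.

Lemma normal_closure_incl (A : K -> Prop) : I A -> normal_closure lt I A.
Proof. intro HA. exists A, (fun _ => A). auto. Qed.

Lemma normal_closure_ideal : is_ideal lt (normal_closure lt I).
Proof.
  split; [| split; [| split]].
  - intros A B [B0 [X [HB [HX Hcov]]]] HAB. exists B0, X. auto.
  - intros A B [B1 [X1 [HB1 [HX1 Hcov1]]]] [B2 [X2 [HB2 [HX2 Hcov2]]]].
    exists (fun z => B1 z \/ B2 z), (fun a z => X1 a z \/ X2 a z).
    split; [now apply (ideal_union HI) | split; [intro; now apply (ideal_union HI) |]].
    intros z [Hz | Hz]; [destruct (Hcov1 z Hz) as [h | [a [l [_ h]]]]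
                        | destruct (Hcov2 z Hz) as [h | [a [l [_ h]]]]];
      (left; tauto) || (right; exists a; tauto).
  - intros x F HF.
    destruct (functional_choice (fun i (p : (K -> Prop) * (K -> K -> Prop)) =>
                I (fst p) /\ (forall a, I (snd p a)) /\
                forall z, F i z -> fst p z \/ diag_union lt (fun _ => True) (snd p) z))
      as [c Hc].
    { intro i. destruct (HF i) as [B [X H]]. now exists (B, X). }
    exists (fun z => exists i, fst (c i) z), (fun a z => exists i, snd (c i) a z).
    split; [apply (ideal_bigcup HI); apply Hc |].
    split; [intro a; apply (ideal_bigcup HI); intro i; apply Hc |].
    intros z [i Hz]. destruct (proj2 (proj2 (Hc i)) z Hz) as [h | [a [l [_ h]]]].
    + left. eauto.
    + right. exists a. eauto.
  - intro a. apply normal_closure_incl, (ideal_singleton HI).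
Qed.

(* If ξ ∈ Y_α ⊆ B_α ∪ ∇X^α with α < ξ, then either ξ ∈ B_α, or ξ ∈ X^α_β with
   β < ξ; in the latter case ξ lies in the max(α, β)-th member of the family chosen below. *)
Lemma normal_closure_normal :
  strict_wellorder lt -> inhabited K -> is_normal lt (normal_closure lt I).
Proof.
  intros Hwo [k] Y HY.
  destruct (functional_choice (fun a (p : (K -> Prop) * (K -> K -> Prop)) =>
              I (fst p) /\ (forall b, I (snd p b)) /\
              forall z, Y a z -> fst p z \/ diag_union lt (fun _ => True) (snd p) z))
    as [c Hc].
  { intro a. destruct (HY a) as [B [X H]]. now exists (B, X). }
  exists (fun _ => False),
    (fun g z => fst (c g) z \/ snd (c g) g z \/
                (exists i : below lt g, snd (c (proj1_sig i)) g z) \/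
                (exists i : below lt g, snd (c g) (proj1_sig i) z)).
  split; [exact (ideal_empty HI k) | split].
  - intro g. repeat apply (ideal_union HI); try apply Hc;
      apply (ideal_bigcup HI); intro i; apply Hc.
  - intros z [a [ltaz [_ Hz]]]. right.
    destruct (proj2 (proj2 (Hc a)) z Hz) as [h | [b [ltbz [_ h]]]].
    + exists a. tauto.
    + destruct (proj1 (proj2 (proj2 Hwo)) a b) as [l | [<- | l]].
      * exists b. split; [exact ltbz | split; [exact Logic.I |]]. right; right; left.
        now exists (exist _ a l).
      * exists a. tauto.
      * exists a. split; [exact ltaz | split; [exact Logic.I |]]. right; right; right.
        now exists (exist _ b l).
Qed.

Lemma diag_iter_ideal (B : K -> Prop) (X : K -> K -> Prop) :
  is_pleasant lt I -> I B -> (forall a, I (X a)) -> forall n, I (diag_iter lt B X n).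
Proof.
  intros Hpl HB HX n. induction n as [|n IH]; [exact HB |].
  apply (ideal_union HI); [exact IH | now apply Hpl].
Qed.

Lemma diag_iter_cover (B : K -> Prop) (X : K -> K -> Prop) :
  well_founded lt -> (forall z, B z \/ diag_union lt (fun _ => True) X z) ->
  forall z, exists n, diag_iter lt B X n z.
Proof.
  intros Hwf Hcov z. induction z as [z IH] using (well_founded_ind Hwf).
  destruct (Hcov z) as [h | [a [ltaz [_ h]]]].
  - now exists 0.
  - destruct (IH a ltaz) as [n Hn]. exists (S n). right. now exists a.
Qed.

Lemma normal_closure_proper :
  well_founded lt -> is_proper I -> is_pleasant lt I ->
  (forall A : nat -> K -> Prop, (forall n, I (A n)) -> I (fun z => exists n, A n z)) ->
  is_proper (normal_closure lt I).
Proof.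
  intros Hwf Hprop Hpl Hsigma [B [X [HB [HX Hcov]]]].
  apply Hprop, (ideal_subset HI _ _ (Hsigma _ (diag_iter_ideal B X Hpl HB HX))).
  intros z _. apply (diag_iter_cover B X Hwf).
  intro w. exact (Hcov w Logic.I).
Qed.

End NormalClosure.

Theorem theorem2p2 (K : Type) (lt : K -> K -> Prop)
  (Hwo : strict_wellorder lt) (Hcard : is_cardinal_order lt)
  (Hreg : is_regular lt) (Hunc : is_uncountable K)
  (I : (K -> Prop) -> Prop)
  (HI : is_ideal lt I) (Hprop : is_proper I) (Hpl : is_pleasant lt I) :
  is_subnormal lt I.
Proof.
  exists (normal_closure lt I).
  split; [exact (normal_closure_ideal K lt I HI) |].
  split; [exact (normal_closure_proper K lt I HI (proj2 (proj2 (proj2 Hwo))) Hprop Hpl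
                   (ideal_countable_union K lt I Hwo HI Hprop Hunc)) |].
  split; [exact (normal_closure_normal K lt I HI Hwo (uncountable_inhabited K Hunc)) |].
  exact (normal_closure_incl K lt I).
Qed.
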